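(* Let $W:\mathbb{N}^\star\times\mathbb{N}^\star\to\mathbb{C}$ be such that $F\,\square_W\,G\in\mathbb{M}$ and $F\,\square_W\,G=G\,\square_W\,F$ for all $F,G\in\mathbb{M}$. Then there exists $E\in\mathbb{M}$ with $F\,\square_W\,E=E\,\square_W\,F=F$ for all $F\in\mathbb{M}$ if and only if $W(1,p^n)=1$ for every prime $p$ and every integer $n\ge0$; in that case $E=\delta_1$.
   Context: $\mathbb{M}$ is the set of functions $F:\mathbb{N}^\star\to\mathbb{C}$ with $F(1)=1$ and $F(ab)=F(a)F(b)$ whenever $\gcd(a,b)=1$. For a weight $W$, $(F\,\square_W\,G)(m)=\sum_{ab=m}F(a)G(b)W(a,b)$. $\delta_1$ is the function with $\delta_1(1)=1$ and $\delta_1(n)=0$ for $n\ge2$. *)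

(* The codomain C is modelled by an arbitrary
   numClosedFieldType (algebraically closed, characteristic 0, with
   conjugation), the MathComp abstraction of the complex numbers. *)
From HB Require Import structures.
From mathcomp Require Import all_boot all_order all_algebra.
Set Implicit Arguments. Unset Strict Implicit. Unset Printing Implicit Defensive.
Import Order.TTheory GRing.Theory Num.Theory.
Local Open Scope ring_scope.

(* Arithmetic functions N* -> C are functions nat -> C whose value at 0 is
   irrelevant (all conditions only look at positive arguments). *)

Definition isMult (C : numClosedFieldType) (F : nat -> C) : Prop :=
  F 1%N = 1 /\
  forall a b : nat, (0 < a)%N -> (0 < b)%N -> coprime a b ->
    F (a * b)%N = F a * F b.

Definition wconv (C : numClosedFieldType) (W : nat -> nat -> C)
  (F G : nat -> C) (m : nat) : C :=
  \sum_(a <- divisors m) F a * G (m %/ a)%N * W a (m %/ a)%N.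

Definition delta1 (C : numClosedFieldType) (n : nat) : C :=
  if n == 1%N then 1 else 0.

(* delta1 picks out the term a = 1 (resp. b = 1) of a W-convolution, so
   delta1 []_W G = G W(1,-) and F []_W delta1 = F W(-,1).  Hence delta1 is a
   unit iff W(1,-) = W(-,1) = 1.  Commutativity gives W(m,1) = W(1,m), and
   W(1,-) = delta1 []_W 1 is multiplicative, so it is 1 as soon as it is 1 on
   prime powers.  Conversely a unit E must be delta1: testing against delta1
   and against the constant 1, strong induction on m kills E(m) for m > 1. *)
From HB Require Import structures.
From mathcomp Require Import all_boot all_order all_algebra.
Import Order.TTheory GRing.Theory Num.Theory.
Local Open Scope ring_scope.

Section WeightedConvolution.
Variable C : numClosedFieldType.
Implicit Types E F G : nat -> C.

Lemma divisors_gt0 {m a} : (0 < m)%N -> a \in divisors m ->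
  (0 < a)%N /\ (0 < m %/ a)%N.
Proof.
move=> m_gt0; rewrite -dvdn_divisors // => a_dvd_m.
have a_gt0 : (0 < a)%N by apply: dvdn_gt0 m_gt0 _ .
by split=> //; rewrite divn_gt0 // dvdn_leq.
Qed.

Lemma isMult_delta1 : isMult (@delta1 C).
Proof.
split=> [|a b _ _ _]; first by rewrite /delta1.
by rewrite /delta1 muln_eq1; do 2 case: (_ == 1%N); rewrite ?mulr1 ?mulr0.
Qed.

Lemma isMult_cst1 : isMult (fun _ => 1 : C).
Proof. by split=> // *; rewrite mulr1. Qed.

Lemma isMult_eq {F G} : (forall m, (0 < m)%N -> F m = G m) ->
  isMult F -> isMult G.
Proof.
move=> eqFG [F1 FM]; split=> [|a b a_gt0 b_gt0 cab]; first by rewrite -eqFG.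
by rewrite -!eqFG ?FM // muln_gt0 a_gt0.
Qed.

Lemma isMult_eq_pfactor {F G} : isMult F -> isMult G ->
    (forall p n, prime p -> F (p ^ n)%N = G (p ^ n)%N) ->
  forall m, (0 < m)%N -> F m = G m.
Proof.
move=> [F1 FM] [G1 GM] eqFG; elim/ltn_ind=> m IHm m_gt0.
have [->|m_neq1] := eqVneq m 1%N; first by rewrite F1 G1.
have m_gt1 : (1 < m)%N by rewrite ltn_neqAle eq_sym m_neq1.
set p := pdiv m; have p_pr : prime p := pdiv_prime m_gt1.
have [r r_coprime defm] := pfactor_coprime p_pr m_gt0.
have r_gt0 : (0 < r)%N by move: m_gt0; rewrite defm muln_gt0 => /andP[].
have pk_gt1 : (1 < p ^ logn p m)%N.
  by rewrite -(expn0 p) ltn_exp2l ?prime_gt1 // logn_gt0 mem_primes p_pr m_gt0 pdiv_dvd.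
have r_lt_m : (r < m)%N by rewrite [X in (_ < X)%N]defm -{1}(muln1 r) ltn_mul2l r_gt0.
have cop : coprime r (p ^ logn p m) by rewrite coprime_sym coprimeXl.
by rewrite defm FM ?GM ?eqFG ?IHm // ltnW.
Qed.

Variable W : nat -> nat -> C.

Lemma wconv_eq F F' G G' m : (0 < m)%N ->
    (forall k, (0 < k)%N -> F k = F' k) -> (forall k, (0 < k)%N -> G k = G' k) ->
  wconv W F G m = wconv W F' G' m.
Proof.
move=> m_gt0 eqF eqG; apply: eq_big_seq => a /(divisors_gt0 m_gt0)[a_gt0 b_gt0].
by rewrite eqF ?eqG.
Qed.

Lemma wconv_delta1l G m : (0 < m)%N -> wconv W (@delta1 C) G m = G m * W 1%N m.
Proof.
move=> m_gt0; rewrite /wconv (bigD1_seq 1%N) ?divisors_uniq -?dvdn_divisors //=.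
rewrite big1 ?addr0 /delta1 /= ?divn1 ?mul1r // => a /negbTE->.
by rewrite !mul0r.
Qed.

Lemma wconv_delta1r F m : (0 < m)%N -> wconv W F (@delta1 C) m = F m * W m 1%N.
Proof.
move=> m_gt0; rewrite /wconv (bigD1_seq m) ?divisors_uniq -?dvdn_divisors //=.
rewrite big1_seq ?addr0 /delta1 /= ?divnn ?m_gt0 ?mulr1 // => a /andP[a_neq_m].
rewrite -dvdn_divisors // => a_dvd_m; case: eqP => [b_eq1|_]; last first.
  by rewrite mulr0 mul0r.
by move: a_neq_m; rewrite -[m](divnK a_dvd_m) b_eq1 mul1n eqxx.
Qed.

Lemma wconv_cst1_delta1_below E m : E 1%N = 1 -> (1 < m)%N ->
    (forall k, (1 < k < m)%N -> E k = 0) ->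
  wconv W (fun _ => 1) E m = E m * W 1%N m + W m 1%N.
Proof.
move=> E1 m_gt1 Esmall; have m_gt0 := ltnW m_gt1.
rewrite /wconv (bigD1_seq m) ?divisors_uniq -?dvdn_divisors //= divnn m_gt0.
rewrite E1 !mul1r addrC -big_filter (bigD1_seq 1%N) ?filter_uniq ?divisors_uniq //=.
  rewrite divn1 mul1r big1_seq ?addr0 // => a /andP[a_neq1].
  rewrite mem_filter => /andP[a_neq_m a_div].
  have [a_gt0 b_gt0] := divisors_gt0 m_gt0 a_div.
  move: a_div; rewrite -dvdn_divisors // => a_dvd_m.
  have a_gt1 : (1 < a)%N by rewrite ltn_neqAle eq_sym a_neq1.
  rewrite Esmall ?mulr0 ?mul0r // ltn_Pdiv // andbT ltn_neqAle eq_sym b_gt0 andbT.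
  by apply: contra a_neq_m => /eqP b1; rewrite -[m](divnK a_dvd_m) b1 mul1n.
by rewrite mem_filter -dvdn_divisors // dvd1n andbT neq_ltn m_gt1.
Qed.

Lemma delta1_unit_eq E : E 1%N = 1 ->
    (forall m, (0 < m)%N ->
       wconv W (@delta1 C) E m = delta1 C m /\ wconv W E (@delta1 C) m = delta1 C m) ->
    (forall m, (0 < m)%N -> wconv W (fun _ => 1) E m = 1) ->
  forall m, (0 < m)%N -> E m = delta1 C m.
Proof.
move=> E1 unitE_delta1 unitE_cst1; elim/ltn_ind=> m IHm m_gt0.
have [->|m_neq1] := eqVneq m 1%N; first by rewrite E1.
have m_gt1 : (1 < m)%N by rewrite ltn_neqAle eq_sym m_neq1.
have delta1m : delta1 C m = 0 by rewrite /delta1 (negbTE m_neq1).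
have [EW1m EWm1] := unitE_delta1 m m_gt0.
rewrite wconv_delta1l // delta1m in EW1m; rewrite wconv_delta1r // delta1m in EWm1.
have Wm1 : W m 1%N = 1.
  rewrite -(unitE_cst1 m m_gt0) wconv_cst1_delta1_below // ?EW1m ?add0r //.
  move=> k /andP[k_gt1 k_lt_m]; rewrite IHm ?(ltnW k_gt1) // /delta1.
  by rewrite gtn_eqF.
by rewrite delta1m -[E m]mulr1 -Wm1.
Qed.

Hypothesis wconvMC : forall F G, isMult F -> isMult G ->
  isMult (wconv W F G) /\ (forall m, (0 < m)%N -> wconv W F G m = wconv W G F m).

Lemma isMult_W1 : isMult (W 1%N).
Proof.
have [convM _] := wconvMC _ _ isMult_delta1 isMult_cst1.
by apply: isMult_eq convM => m m_gt0; rewrite wconv_delta1l // mul1r.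
Qed.

Lemma W_1l_1r_eq1 : (forall p n, prime p -> W 1%N (p ^ n)%N = 1) ->
  forall m, (0 < m)%N -> W 1%N m = 1 /\ W m 1%N = 1.
Proof.
move=> W1pn; have W1 := isMult_eq_pfactor isMult_W1 isMult_cst1 W1pn.
move=> m m_gt0; have [_ convC] := wconvMC _ _ isMult_delta1 isMult_cst1.
by have := convC m m_gt0; rewrite wconv_delta1l // wconv_delta1r // !mul1r W1.
Qed.

End WeightedConvolution.

Theorem mainTheorem6 (C : numClosedFieldType) (W : nat -> nat -> C)
  (hW : forall F G : nat -> C, isMult F -> isMult G ->
          isMult (wconv W F G) /\
          (forall m : nat, (0 < m)%N -> wconv W F G m = wconv W G F m)) :
  ((exists E : nat -> C, isMult E /\
      forall F : nat -> C, isMult F -> forall m : nat, (0 < m)%N ->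
        wconv W F E m = F m /\ wconv W E F m = F m)
   <->
   (forall p n : nat, prime p -> W 1%N (p ^ n)%N = 1))
  /\
  (forall E : nat -> C, isMult E ->
     (forall F : nat -> C, isMult F -> forall m : nat, (0 < m)%N ->
        wconv W F E m = F m /\ wconv W E F m = F m) ->
     forall m : nat, (0 < m)%N -> E m = delta1 C m).
Proof.
have unit_delta1 E : isMult E ->
    (forall F, isMult F -> forall m, (0 < m)%N ->
       wconv W F E m = F m /\ wconv W E F m = F m) ->
    forall m, (0 < m)%N -> E m = delta1 C m.
  move=> [E1 _] unitE; apply: delta1_unit_eq => // m m_gt0.
    exact: unitE _ (isMult_delta1 C) m m_gt0.
  exact: (unitE _ (isMult_cst1 C) m m_gt0).1.
split=> //; split=> [[E [multE unitE]] p n p_pr | W1pn].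
  have pn_gt0 : (0 < p ^ n)%N by rewrite expn_gt0 prime_gt0.
  have [_ <-] := unitE _ (isMult_cst1 C) _ pn_gt0.
  rewrite (@wconv_eq C W E (@delta1 C) _ (fun _ => 1)) //; last exact: unit_delta1.
  by rewrite wconv_delta1l // mul1r.
exists (delta1 C); split=> [|F _ m m_gt0]; first exact: isMult_delta1.
have [W1m Wm1] := @W_1l_1r_eq1 C W hW W1pn m m_gt0.
by rewrite wconv_delta1l // wconv_delta1r // W1m Wm1 mulr1.
Qed.
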